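(* Let $a,b$ be integers with $1\le a<b$. Then there exist an integer $N$ and a fat flat subscheme $W$ of $\mathbb{P}^N$ (over an infinite field $\mathbb{K}$) such that $\widehat{\alpha}(I(W))=b/a$. (For instance, for any $N\ge a$, the star configuration $W=S_N(a,b)$ has this property.)
   Context: The Waldschmidt constant of a homogeneous ideal $I$ is $\widehat{\alpha}(I)=\lim_{m\to\infty}\alpha(I^{(m)})/m$, where $\alpha(J)$ is the least degree of a nonzero element of $J$ and $I^{(m)}$ is the $m$-th symbolic power. A fat flat subscheme of $\mathbb{P}^N$ is a scheme defined by an ideal of the form $\bigcap_j I(\Lambda_j)^{a_j}$ with $\Lambda_j$ linear subspaces and $a_j\ge1$. The star configuration $S_N(a,b)$ ($1\le a\le \min(N,b)$) is the union of the $\binom{b}{a}$ codimension-$a$ linear subspaces $H_{i_1}\cap\dots\cap H_{i_a}$ for $b$ general hyperplanes $H_1,\dots,H_b$ of $\mathbb{P}^N$. *)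

From HB Require Import structures.
From mathcomp Require Import all_boot all_order all_algebra.
From mathcomp Require Import mpoly.
From Stdlib Require List.
Set Implicit Arguments. Unset Strict Implicit. Unset Printing Implicit Defensive.
Import Order.TTheory GRing.Theory Num.Theory.
Local Open Scope ring_scope.

Section Defs.
Variables (K : fieldType) (n : nat).
(* n = N+1 : number of homogeneous coordinates of P^N *)
Notation P := {mpoly K[n]}.

Definition is_ideal (I : P -> Prop) : Prop :=
  I 0 /\ (forall f g, I f -> I g -> I (f + g)) /\ (forall r f, I f -> I (r * f)).

Definition is_prime_ideal (I : P -> Prop) : Prop :=
  is_ideal I /\ ~ I 1 /\ (forall f g, I (f * g) -> I f \/ I g).

Definition ideal_pow (I : P -> Prop) (m : nat) (f : P) : Prop :=
  exists (k : nat) (c : 'I_k -> P) (g : 'I_k -> 'I_m -> P),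
    (forall i j, I (g i j)) /\ f = \sum_(i < k) c i * \prod_(j < m) g i j.

(* associated primes: primes of the form (I : g) *)
Definition assoc_prime (I : P -> Prop) (Q : P -> Prop) : Prop :=
  is_prime_ideal Q /\ exists g : P, forall h, Q h <-> I (h * g).

(* m-th symbolic power: I^(m) = intersection over Q in Ass(I) of (I^m R_Q cap R) *)
Definition symb_pow (I : P -> Prop) (m : nat) (f : P) : Prop :=
  forall Q, assoc_prime I Q -> exists s : P, ~ Q s /\ ideal_pow I m (s * f).

Definition tdeg (f : P) : nat := (msize f).-1.

Definition alpha_is (J : P -> Prop) (d : nat) : Prop :=
  (exists f, J f /\ f != 0 /\ tdeg f = d) /\
  (forall f, J f -> f != 0 -> (d <= tdeg f)%N).

Definition waldschmidt_is (I : P -> Prop) (w : rat) : Prop :=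
  exists u : nat -> nat,
    (forall m, alpha_is (symb_pow I m.+1) (u m)) /\
    forall eps : rat, 0 < eps -> exists M : nat, forall m, (M <= m)%N ->
      `|(u m)%:R / (m.+1)%:R - w| < eps.

(* A component of a fat flat scheme: the linear subspace of P^N which is the
   projectivization of the span of fc_k vectors of K^n, with multiplicity fc_mult *)
Record fat_comp := FatComp {
  fc_k : nat;
  fc_vec : 'I_fc_k -> 'I_n -> K;
  fc_mult : nat }.

Definition span_pt (L : fat_comp) (c : 'I_(fc_k L) -> K) : 'I_n -> K :=
  fun j => \sum_(i < fc_k L) c i * @fc_vec L i j.

Definition lin_ideal (L : fat_comp) (f : P) : Prop :=
  forall c : 'I_(fc_k L) -> K, f.@[@span_pt L c] = 0.

(* the linear subspace is nonempty in P^N and the multiplicity is >= 1 *)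
Definition valid_comp (L : fat_comp) : Prop :=
  (exists i j, @fc_vec L i j != 0) /\ (1 <= fc_mult L)%N.

Definition fatflat_ideal (W : seq fat_comp) (f : P) : Prop :=
  List.Forall (fun L => ideal_pow (lin_ideal L) (fc_mult L) f) W.

Definition valid_fat (W : seq fat_comp) : Prop := List.Forall valid_comp W.
End Defs.

From HB Require Import structures.
From mathcomp Require Import all_boot all_order all_algebra.
From mathcomp Require Import mpoly.
From Stdlib Require Import Classical ClassicalEpsilon.
From Stdlib Require List.
From mathcomp Require Import zify ring lra.
Set Implicit Arguments. Unset Strict Implicit. Unset Printing Implicit Defensive.
Import Order.TTheory GRing.Theory Num.Theory.
Local Open Scope ring_scope.

(* Take b = N + 1 coordinates, indexed cyclically, and let W be the union of the b
   coordinate subspaces {x_i = x_(i+1) = ... = x_(i+a-1) = 0} (a monomial analogue of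
   the star configuration S_N(a,b)).  Their ideals are the associated primes of I(W).
   Lower bound: an element of I(W)^(m) vanishes to order m along each of these
   subspaces, so each of its monomials x^e has e_i + ... + e_(i+a-1) >= m for every i;
   summing over the b windows counts every exponent a times, whence a deg >= b m.
   Upper bound: with q = m/a + 1, the monomial (x_0 ... x_N)^q times a unit of each
   localization is a product of a q >= m generators x_t * prod_(j outside the window) x_j
   of I(W), so alpha(I(W)^(m)) <= b q.  Hence b m <= a alpha(I(W)^(m)) <= b (m + a). *)

Lemma base_expansion_inj (D k : nat) (f g : 'I_k -> nat) :
  (forall i, f i < D)%N -> (forall i, g i < D)%N ->
  (\sum_(i < k) f i * D ^ i = \sum_(i < k) g i * D ^ i)%N -> f =1 g.
Proof.
elim: k f g => [|k IHk] f g ltfD ltgD; first by move=> _ [].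
have D_gt0 : (0 < D)%N by apply: leq_ltn_trans (ltfD ord0).
rewrite !big_ord_recl !expn0 !muln1.
have shift (h : 'I_k.+1 -> nat) : (\sum_(i < k) h (lift ord0 i) * D ^ bump 0 i)%N
    = ((\sum_(i < k) h (lift ord0 i) * D ^ i) * D)%N.
  by rewrite big_distrl; apply: eq_bigr => i _; rewrite /bump add1n expnSr mulnA.
rewrite !shift => eqfg.
have eq0 : f ord0 = g ord0.
  have := congr1 (modn^~ D) eqfg.
  by rewrite /= ![(_ + _ * D)%N]addnC !modnMDl !modn_small.
have eqS := congr1 (divn^~ D) eqfg.
rewrite /= ![(_ + _ * D)%N]addnC !divnMDl // !divn_small // !addn0 in eqS.
have eq_lift := IHk _ _ (fun i => ltfD _) (fun i => ltgD _) eqS.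
by move=> i; case: (unliftP ord0 i) => [j ->|->].
Qed.

Section InfiniteField.
Variables (K : fieldType) (K_infinite : forall s : seq K, exists x, x \notin s).

Lemma uniq_seq_of_size k : exists s : seq K, uniq s /\ size s = k.
Proof.
elim: k => [|k [s [uniq_s size_s]]]; first by exists [::].
have [x xNs] := K_infinite s.
by exists (x :: s); rewrite /= xNs uniq_s size_s.
Qed.

Lemma poly_exists_nonroot (q : {poly K}) : q != 0 -> exists t, q.[t] != 0.
Proof.
move=> q_neq0; have [s [uniq_s size_s]] := uniq_seq_of_size (size q).
have [all_roots|] := boolP (all (root q) s).
  by have := max_poly_roots q_neq0 all_roots uniq_s; rewrite size_s ltnn.
by case/allPn => t _ qt_neq0; exists t.
Qed.

Variable n : nat.
Implicit Type p : {mpoly K[n]}.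

(* Kronecker substitution x_i := t ^ (D ^ i); for D = msize p it sends distinct
   monomials of p to distinct powers of t. *)
Definition mnm_base (D : nat) (m : 'X_{1..n}) : nat := (\sum_(i < n) m i * D ^ i)%N.

Definition kronecker (D : nat) p : {poly K} :=
  \sum_(m <- msupp p) (p@_m)%:P * 'X^(mnm_base D m).

Lemma horner_kronecker D p t : (kronecker D p).[t] = p.@[fun i => t ^+ (D ^ i)].
Proof.
rewrite mevalE horner_sum; apply: eq_bigr => m _.
rewrite hornerCM hornerXn -prodrXr; congr (_ * _).
by apply: eq_bigr => i _; rewrite -exprM mulnC.
Qed.

Lemma mnm_lt_msize p m i : m \in msupp p -> (m i < msize p)%N.
Proof.
by move/msize_mdeg_lt; apply: leq_ltn_trans; rewrite mdegE (bigD1 i) ?leq_addr.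
Qed.

Lemma coef_kronecker p m : m \in msupp p ->
  (kronecker (msize p) p)`_(mnm_base (msize p) m) = p@_m.
Proof.
move=> m_p; rewrite coef_sum.
have -> : p@_m = (\sum_(m' <- msupp p) p@_m' *: 'X_[m'])@_m by rewrite -mpolyE.
rewrite raddf_sum /=.
apply: eq_big_seq => m' m'_p; rewrite coefCM coefXn mcoeffZ mcoeffX.
suff -> : (mnm_base (msize p) m == mnm_base (msize p) m') = (m' == m) by [].
apply/eqP/eqP => [eq_base|<-] //; apply/mnmP => i; symmetry.
by apply: (@base_expansion_inj (msize p) n (fun i => m i) (fun i => m' i) _ _ eq_base)
  => j; apply: mnm_lt_msize.
Qed.

Lemma mpoly_exists_nonroot p : p != 0 -> exists v, p.@[v] != 0.
Proof.
move=> p_neq0; have lead_p := mlead_supp p_neq0.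
have kron_neq0 : kronecker (msize p) p != 0.
  apply/eqP => kron0; have := coef_kronecker lead_p.
  by rewrite kron0 coef0 => /esym/eqP; rewrite mcoeff_eq0 lead_p.
have [t kron_t] := poly_exists_nonroot kron_neq0.
by exists (fun i => t ^+ (msize p ^ i)); rewrite -horner_kronecker.
Qed.

Lemma mpoly_eq0_of_meval p : (forall v, p.@[v] = 0) -> p = 0.
Proof.
move=> p_vanishes; apply/eqP; apply: contraT => /mpoly_exists_nonroot [v].
by rewrite p_vanishes eqxx.
Qed.
End InfiniteField.

Lemma rmorph_mmap (n : nat) (R : nzRingType) (S S' : comNzRingType)
    (g : {rmorphism S -> S'}) (f : R -> S) (h : 'I_n -> S) p :
  g (mmap f h p) = mmap (g \o f) (g \o h) p.
Proof.
rewrite /mmap rmorph_sum; apply: eq_bigr => m _.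
rewrite rmorphM /mmap1 rmorph_prod; congr (_ * _).
by apply: eq_bigr => i _; rewrite rmorphXn.
Qed.

Lemma eq_mmap (n : nat) (R S : nzRingType) (f1 f2 : R -> S) (h1 h2 : 'I_n -> S) p :
  f1 =1 f2 -> h1 =1 h2 -> mmap f1 h1 p = mmap f2 h2 p.
Proof.
by move=> eq_f eq_h; apply: eq_bigr => m _; rewrite eq_f (mmap1_eq _ eq_h).
Qed.

Section VanishingOrder.
Variable R : idomainType.
Implicit Types p q : {poly R}.

Definition vanishes_to (k : nat) p := forall i, (i < k)%N -> p`_i = 0.

Lemma vanishes_to_sum k (I : Type) (r : seq I) (F : I -> {poly R}) :
  (forall i, vanishes_to k (F i)) -> vanishes_to k (\sum_(i <- r) F i).
Proof.
move=> vanF j ltjk; rewrite coef_sum big1 // => i _; exact: vanF.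
Qed.

Lemma vanishes_toM k l p q :
  vanishes_to k p -> vanishes_to l q -> vanishes_to (k + l) (p * q).
Proof.
move=> van_p van_q j ltj; rewrite coefM big1 // => i _.
have [ltik|leki] := ltnP i k; first by rewrite van_p ?mul0r.
by rewrite van_q ?mulr0 //; have := ltn_ord i; lia.
Qed.

Lemma vanishes_toMl k p q : vanishes_to k q -> vanishes_to k (p * q).
Proof. exact: (@vanishes_toM 0). Qed.

Lemma vanishes_to_prod m (F : 'I_m -> {poly R}) :
  (forall j, vanishes_to 1 (F j)) -> vanishes_to m (\prod_(j < m) F j).
Proof.
elim: m F => [|m IHm] F vanF; first by [].
rewrite big_ord_recr.
have := vanishes_toM (IHm (fun j => F (widen_ord (leqnSn m) j)) (fun j => vanF _))
  (vanF ord_max).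
by rewrite addn1.
Qed.

Lemma vanishes_toMKl k p q : p`_0 != 0 -> vanishes_to k (p * q) -> vanishes_to k q.
Proof.
move=> p0_neq0 van_pq; elim/ltn_ind=> j IHj ltjk.
have /eqP := van_pq j ltjk; rewrite coefM big_ord_recl big1 ?addr0.
  by rewrite subn0 mulf_eq0 (negbTE p0_neq0) => /eqP.
move=> i _; rewrite lift0 IHj ?mulr0 //; have := ltn_ord i; lia.
Qed.
End VanishingOrder.

Section CoordinateSubspace.
Variables (K : fieldType) (K_infinite : forall s : seq K, exists x, x \notin s).
Variable n : nat.
Notation P := {mpoly K[n]}.
Implicit Types (T : {set 'I_n}) (f g s : P) (c : 'I_n -> K) (m : 'X_{1..n}).

Definition zero_on T c : 'I_n -> K := fun i => if i \in T then 0 else c i.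

Definition coord_ideal T f : Prop := forall c, f.@[zero_on T c] = 0.

Definition subst0 T f : P := f \mPo [tuple if i \in T then 0 else 'X_i | i < n].

Lemma meval_subst0 T f c : (subst0 T f).@[c] = f.@[zero_on T c].
Proof.
rewrite comp_mpoly_meval; apply: meval_eq => i; rewrite tnth_mktuple /zero_on.
by case: ifP; rewrite ?meval0 ?mevalXU.
Qed.

Lemma coord_idealE T f : coord_ideal T f <-> subst0 T f = 0.
Proof.
split=> [f_T|f_T c]; last by rewrite -meval_subst0 f_T meval0.
by apply: (mpoly_eq0_of_meval K_infinite) => c; rewrite meval_subst0.
Qed.

Lemma coord_ideal_is_ideal T : is_ideal (coord_ideal T).
Proof.
split=> [c|]; first by rewrite meval0.
split=> [f g f_T g_T c|r f f_T c]; first by rewrite mevalD f_T g_T addr0.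
by rewrite mevalM f_T mulr0.
Qed.

Lemma coord_ideal_prime T : is_prime_ideal (coord_ideal T).
Proof.
split; [exact: coord_ideal_is_ideal|split].
- by move/(_ (fun=> 0)); rewrite meval1 => /eqP; rewrite oner_eq0.
- move=> f g; rewrite !coord_idealE /subst0 rmorphM /= => /eqP.
  by rewrite mulf_eq0 => /orP[] /eqP; [left|right].
Qed.

Definition mdeg_on T m : nat := (\sum_(i in T) m i)%N.

(* The coefficient of ['X^k] in [grade_on T f] is the part of [f] of degree [k]
   in the variables indexed by [T]. *)
Definition grade_on T f : {poly P} :=
  mmap (polyC \o @mpolyC n K) (fun i => if i \in T then 'X * ('X_i)%:P else ('X_i)%:P) f.

Lemma grade_onM T f g : grade_on T (f * g) = grade_on T f * grade_on T g.
Proof. exact: rmorphM. Qed.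

Lemma grade_on_sum T (I : Type) (r : seq I) (F : I -> P) :
  grade_on T (\sum_(i <- r) F i) = \sum_(i <- r) grade_on T (F i).
Proof. exact: raddf_sum. Qed.

Lemma grade_on_prod T k (F : 'I_k -> P) :
  grade_on T (\prod_(i < k) F i) = \prod_(i < k) grade_on T (F i).
Proof. exact: rmorph_prod. Qed.

Lemma coef0_grade_on T f : (grade_on T f)`_0 = subst0 T f.
Proof.
rewrite -horner_coef0 -[_.[0]]/(horner_eval 0 (grade_on T f)) rmorph_mmap.
apply: eq_mmap => [a|i] /=; rewrite /horner_eval ?hornerC // tnth_mktuple.
by case: ifP; rewrite ?hornerM ?hornerX ?mul0r ?hornerC.
Qed.

Lemma mcoeff_grade_on T f k m :
  ((grade_on T f)`_k)@_m = f@_m * (mdeg_on T m == k)%:R.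
Proof.
have grade_mono m' : mmap1 (fun i => if i \in T then 'X * ('X_i)%:P else ('X_i)%:P) m'
    = ('X_[m'] : P)%:P * 'X^(mdeg_on T m').
  rewrite /mmap1 /mdeg_on -prodrXr mpolyXE_id rmorph_prod /=.
  rewrite [X in _ * X]big_mkcond /= -big_split /=; apply: eq_bigr => i _.
  case: ifP => _; last by rewrite mulr1 rmorphXn.
  by rewrite exprMn rmorphXn mulrC.
rewrite /grade_on /mmap coef_sum raddf_sum /=.
under eq_bigr => m' _ do rewrite grade_mono mulrA -rmorphM coefCM coefXn /=
   mul_mpolyC mulr_natr mcoeffMn mcoeffZ mcoeffX.
have -> : f@_m = (\sum_(m' <- msupp f) f@_m' *: 'X_[m'])@_m by rewrite -mpolyE.
rewrite raddf_sum /= big_distrl /=; apply: eq_bigr => m' _.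
rewrite mcoeffZ mcoeffX; case: eqP => [->|_]; last by rewrite mulr0 mul0rn mul0r.
by rewrite [(k == _)]eq_sym mulr_natr.
Qed.

(* Grading by [T]-degree, [s * f] vanishes to order [M] at 0 while [s] has a
   nonzero constant term. *)
Lemma ideal_pow_mdeg_on_ge (J : P -> Prop) T M s f :
  (forall g, J g -> coord_ideal T g) -> ~ coord_ideal T s ->
  ideal_pow J M (s * f) -> forall m, m \in msupp f -> (M <= mdeg_on T m)%N.
Proof.
move=> sub_JT s_notin [k [c [g [Jg def_sf]]]].
have van_sf : vanishes_to M (grade_on T (s * f)).
  rewrite def_sf grade_on_sum; apply: vanishes_to_sum => i.
  rewrite grade_onM grade_on_prod; apply/vanishes_toMl/vanishes_to_prod => j l.
  by rewrite ltnS leqn0 => /eqP ->; rewrite coef0_grade_on -coord_idealE; apply: sub_JT.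
have s0_neq0 : (grade_on T s)`_0 != 0.
  by rewrite coef0_grade_on; apply/eqP => /coord_idealE.
rewrite grade_onM in van_sf; have van_f := vanishes_toMKl s0_neq0 van_sf.
move=> m m_f; rewrite leqNgt; apply/negP => /van_f coef_f.
have := mcoeff_grade_on T f (mdeg_on T m) m.
by rewrite coef_f mcoeff0 eqxx mulr1 => /esym/eqP; rewrite mcoeff_eq0 m_f.
Qed.
End CoordinateSubspace.

Definition coord_comp (K : fieldType) (n : nat) (T : {set 'I_n}) : fat_comp K n :=
  @FatComp K n n (fun i j => if (i == j) && (j \notin T) then 1 else 0) 1.

Lemma lin_ideal_coord_comp (K : fieldType) (n : nat) (T : {set 'I_n}) f :
  lin_ideal (coord_comp K T) f <-> coord_ideal T f.
Proof.
have span_zero_on (c : 'I_n -> K) : @span_pt K n (coord_comp K T) c =1 zero_on T c.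
  move=> j; rewrite /span_pt /zero_on /= (bigD1 j) //= big1 => [|i /negbTE neq_ij].
    by rewrite eqxx; case: (j \in T); rewrite /= ?mulr0 ?mulr1 addr0.
  by rewrite neq_ij mulr0.
by split=> f_T c; rewrite -(f_T c); apply: meval_eq => j; rewrite span_zero_on.
Qed.

Section IdealPowers.
Variables (K : fieldType) (n : nat).
Notation P := {mpoly K[n]}.
Implicit Types (I J : P -> Prop) (f : P).

Lemma eq_ideal_pow I J m f :
  (forall g, I g <-> J g) -> ideal_pow I m f -> ideal_pow J m f.
Proof. by move=> eqIJ [k [c [g [Ig ->]]]]; exists k, c, g; split=> // i j; apply/eqIJ. Qed.

Lemma ideal_pow1 I f : is_ideal I -> ideal_pow I 1 f <-> I f.
Proof.
move=> [I0 [ID IM]]; split=> [[k [c [g [Ig ->]]]]|If].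
  by apply: (big_ind I) => // i _; rewrite big_ord1; apply: IM.
by exists 1%N, (fun=> 1), (fun _ _ => f); rewrite !big_ord1 mul1r.
Qed.

Lemma ideal_pow_prod J m (l : seq P) :
  (m <= size l)%N -> {in l, forall y, J y} -> ideal_pow J m (\prod_(y <- l) y).
Proof.
move=> le_m_l Jl; exists 1%N, (fun=> \prod_(y <- drop m l) y), (fun _ j => nth 0 l j).
split=> [_ j|]; first by apply/Jl/mem_nth; apply: leq_trans le_m_l.
rewrite big_ord1 -{1}(cat_take_drop m l) big_cat /= mulrC; congr (_ * _).
rewrite (big_nth 0) size_take_min (minn_idPl le_m_l) big_mkord.
by apply: eq_bigr => j _; rewrite nth_take.
Qed.

Lemma alpha_exists J f : J f -> f != 0 -> exists d, alpha_is J d /\ (d <= tdeg f)%N.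
Proof.
move=> Jf f_neq0.
pose deg_in d := if excluded_middle_informative (exists g, J g /\ g != 0 /\ tdeg g = d)
  then true else false.
have deg_inP d : reflect (exists g, J g /\ g != 0 /\ tdeg g = d) (deg_in d).
  by rewrite /deg_in; case: excluded_middle_informative; constructor.
have deg_f : deg_in (tdeg f) by apply/deg_inP; exists f.
case: (ex_minnP (ex_intro deg_in _ deg_f)) => d /deg_inP deg_d min_d.
exists d; split; last exact: min_d.
by split=> // g Jg g_neq0; apply/min_d/deg_inP; exists g.
Qed.
End IdealPowers.

Lemma ratio_squeeze (R : archiRealFieldType) (a b : nat) (u : nat -> nat) :
  (0 < a)%N -> (forall m, b * m.+1 <= a * u m <= b * (m.+1 + a))%N ->
  forall eps : R, 0 < eps -> exists M, forall m, (M <= m)%N ->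
    `|(u m)%:R / m.+1%:R - b%:R / a%:R| < eps.
Proof.
move=> a_gt0 bounds eps eps_gt0.
have b_eps_ge0 : 0 <= b%:R / eps by rewrite divr_ge0 // ltW.
exists (Num.bound (b%:R / eps)) => m le_bound_m.
have {le_bound_m} lt_b_m : b%:R < eps * m.+1%:R.
  rewrite -ltr_pdivrMl // mulrC; apply: lt_le_trans (archi_boundP b_eps_ge0) _.
  by rewrite ler_nat ltnW.
have /andP[lb ub] := bounds m.
move: lb ub; rewrite -!(ler_nat R) !natrM !natrD.
have a_neq0 : (a%:R : R) != 0 by rewrite pnatr_eq0 -lt0n.
have m_neq0 : (m.+1%:R : R) != 0 by rewrite pnatr_eq0.
have -> : (u m)%:R / m.+1%:R - b%:R / a%:R
    = ((a%:R * (u m)%:R - b%:R * m.+1%:R) / (a%:R * m.+1%:R) : R).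
  by field; rewrite nat1r m_neq0 a_neq0.
move=> lb ub; rewrite ger0_norm; last by rewrite divr_ge0 ?subr_ge0 ?mulr_ge0.
rewrite ltr_pdivrMr ?mulr_gt0 ?ltr0n //.
have a_pos : (0 : R) < a%:R by rewrite ltr0n.
nra.
Qed.

Lemma waldschmidt_of_alpha_bounds (K : fieldType) (n : nat)
    (I : {mpoly K[n]} -> Prop) (a b : nat) : (0 < a)%N ->
  (forall m, exists d, alpha_is (symb_pow I m.+1) d /\
                       (b * m.+1 <= a * d <= b * (m.+1 + a))%N) ->
  waldschmidt_is I (b%:R / a%:R).
Proof.
move=> a_gt0 /choice [u u_spec]; exists u; split=> [m|]; first exact: (u_spec m).1.
by apply: ratio_squeeze => // m; apply: (u_spec m).2.
Qed.

Lemma Forall_map_mem (T : eqType) (U : Type) (Pr : U -> Prop) (F : T -> U) (s : seq T) :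
  List.Forall Pr [seq F x | x <- s] <-> (forall x, x \in s -> Pr (F x)).
Proof.
elim: s => [|x s IHs] /=; first by split=> // _; constructor.
rewrite List.Forall_cons_iff IHs; split=> [[Fx Fs] y|Fs].
  by rewrite in_cons => /orP[/eqP->|/Fs].
by split=> [|y ys]; apply: Fs; rewrite ?mem_head // in_cons ys orbT.
Qed.

Section CyclicConfiguration.
Variables (K : fieldType) (K_infinite : forall s : seq K, exists x, x \notin s).
Variables (N a : nat).
Hypotheses (a_gt0 : (0 < a)%N) (a_lt_n : (a < N.+1)%N).
Notation n := N.+1.
Notation P := {mpoly K[n]}.
Implicit Types (i j : 'I_n) (T : {set 'I_n}) (f g : P).

(* The [a] cyclically consecutive coordinates starting at [i]; [+] is addition in
   the ring ['I_n] = Z/nZ. *)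
Definition window i : {set 'I_n} := [set i + inZp k | k : 'I_a].

Lemma window_inj i : injective (fun k : 'I_a => i + inZp k).
Proof.
move=> k k' /addrI /(congr1 val) /=.
by rewrite !modn_small ?(ltn_trans _ a_lt_n) //; apply: val_inj.
Qed.

Lemma card_window i : #|window i| = a.
Proof. by rewrite card_imset ?card_ord //; apply: window_inj. Qed.

Lemma window_proper i : exists j, j \notin window i.
Proof.
have [j j_out|all_in] := pickP [pred j | j \notin window i]; first by exists j.
suff full : window i = [set: 'I_n].
  by move: a_lt_n; rewrite -(card_window i) full cardsT card_ord ltnn.
by apply/setP => j; rewrite inE; apply/negbFE/all_in.
Qed.

Lemma window_eq_or_leak i j :
  window i = window j \/ exists2 k, k \in window i & k \notin window j.
Proof.
case: (boolP (window i \subset window j)) => [sub_ij|/subsetPn[k k_i k_j]].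
  by left; apply/eqP; rewrite eqEcard sub_ij !card_window /=.
by right; exists k.
Qed.

(* Each coordinate lies in exactly [a] windows. *)
Lemma sum_mdeg_on_window (m : 'X_{1..n}) :
  (\sum_(i < n) mdeg_on (window i) m = a * mdeg m)%N.
Proof.
have mdeg_window i : mdeg_on (window i) m = (\sum_(k < a) m (i + inZp k)%R)%N.
  by rewrite /mdeg_on big_imset //= => k k' _ _; apply: window_inj.
under eq_bigr => i _ do rewrite mdeg_window.
rewrite exchange_big /= mdegE (eq_bigr (fun=> \sum_(i < n) m i)%N).
  by rewrite sum_nat_const card_ord.
by move=> k _; symmetry; rewrite (reindex_inj (addIr (inZp k : 'I_n))).
Qed.

Definition cyclic_config : seq (fat_comp K n) :=
  [seq coord_comp K (window i) | i <- enum 'I_n].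

Definition cyclic_ideal : P -> Prop := fatflat_ideal cyclic_config.

Lemma cyclic_idealP f : cyclic_ideal f <-> forall i, coord_ideal (window i) f.
Proof.
have coord_pow1 i : ideal_pow (lin_ideal (coord_comp K (window i))) 1 f
    <-> coord_ideal (window i) f.
  have eq_lin := @lin_ideal_coord_comp K n (window i).
  have pow1 := ideal_pow1 f (coord_ideal_is_ideal K (window i)).
  split=> [/(eq_ideal_pow eq_lin)/pow1 //|/pow1].
  by apply: eq_ideal_pow => g; apply: iff_sym.
rewrite /cyclic_ideal /fatflat_ideal /cyclic_config Forall_map_mem.
by split=> [f_I i|f_I i _]; apply/coord_pow1; [apply: f_I; rewrite mem_enum|].
Qed.

Lemma valid_cyclic_config : valid_fat cyclic_config.
Proof.
rewrite /valid_fat /cyclic_config Forall_map_mem => i _; split=> //=.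
by have [j j_out] := window_proper i; exists j, j; rewrite eqxx j_out oner_neq0.
Qed.

Definition out_prod T : P := \prod_(j | j \notin T) 'X_j.

Lemma meval_out_prod T v : (out_prod T).@[v] = \prod_(j | j \notin T) v j.
Proof. by rewrite /out_prod rmorph_prod; apply: eq_bigr => j _; apply: mevalXU. Qed.

Lemma out_prod_leak T (S : {set 'I_n}) c :
  (exists2 k, k \in S & k \notin T) -> (out_prod T).@[zero_on S c] = 0.
Proof. by case=> k k_S k_T; rewrite meval_out_prod (bigD1 k) //= /zero_on k_S mul0r. Qed.

Lemma out_prod_one T : (out_prod T).@[zero_on T (fun=> 1)] = 1.
Proof. by rewrite meval_out_prod big1 // => j /negbTE j_T; rewrite /zero_on j_T. Qed.

Lemma out_prod_notin T : ~ coord_ideal T (out_prod T).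
Proof. by move/(_ (fun=> 1)) => /eqP; rewrite out_prod_one oner_eq0. Qed.

Lemma cyclic_idealM_out_prod i h :
  coord_ideal (window i) h -> cyclic_ideal (h * out_prod (window i)).
Proof.
move=> h_i; apply/cyclic_idealP => j c; rewrite mevalM.
have [->|leak] := window_eq_or_leak j i; first by rewrite h_i mul0r.
by rewrite out_prod_leak ?mulr0.
Qed.

Lemma assoc_prime_window i : assoc_prime cyclic_ideal (coord_ideal (window i)).
Proof.
split; first exact: coord_ideal_prime.
exists (out_prod (window i)) => h; split; first exact: cyclic_idealM_out_prod.
move/cyclic_idealP/(_ i)/(coord_ideal_prime K_infinite (window i)).2.2.
by case=> // /out_prod_notin.
Qed.

Lemma symb_pow_tdeg_lb M f :
  symb_pow cyclic_ideal M f -> f != 0 -> (n * M <= a * tdeg f)%N.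
Proof.
move=> f_M f_neq0; have lead_f := mlead_supp f_neq0.
have mdeg_ge i : (M <= mdeg_on (window i) (mlead f))%N.
  have [s [s_notin sf_M]] := f_M _ (assoc_prime_window i).
  by apply: (ideal_pow_mdeg_on_ge K_infinite _ s_notin sf_M) => // g /cyclic_idealP.
have : (n * M <= \sum_(i < n) mdeg_on (window i) (mlead f))%N.
  by rewrite -[X in (X * M)%N]card_ord -sum_nat_const leq_sum.
rewrite sum_mdeg_on_window => /leq_trans; apply; rewrite leq_mul2l.
have := msize_mdeg_lt lead_f; rewrite /tdeg => lt_size.
by rewrite -ltnS prednK ?lt_size ?orbT // (leq_ltn_trans _ lt_size).
Qed.

Definition power_witness M : P := (\prod_(j < n) 'X_j) ^+ (M %/ a).+1.

Lemma tdeg_power_witness M : tdeg (power_witness M) = (n * (M %/ a).+1)%N.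
Proof.
have -> : power_witness M = 'X_[(\sum_(j < n) U_(j)) *+ (M %/ a).+1].
  by rewrite -mpolyXn (big_morph _ (@mpolyXD _ _) (@mpolyX0 _ _)).
rewrite /tdeg msizeX mdegMn mdeg_sum (eq_bigr (fun=> 1%N)) => [|j _]; last exact: mdeg1.
by rewrite sum_nat_const card_ord muln1.
Qed.

Lemma power_witness_neq0 M : power_witness M != 0.
Proof. by apply/eqP => pw0; have := tdeg_power_witness M; rewrite pw0 /tdeg msize0. Qed.

Lemma symb_pow_power_witness M : symb_pow cyclic_ideal M (power_witness M).
Proof.
move=> Q [[_ [Q_proper _]] [g def_Q]]; set q := (M %/ a).+1.
have [i g_out] : exists i, ~ coord_ideal (window i) g.
  apply: NNPP => all_in; apply: Q_proper; apply/def_Q; rewrite mul1r.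
  by apply/cyclic_idealP => i; apply: NNPP => g_out; apply: all_in; exists i.
set T := window i; set r := out_prod T.
have Q_sub h : Q h -> coord_ideal T h.
  by move/def_Q/cyclic_idealP/(_ i)/(coord_ideal_prime K_infinite T).2.2 => [].
exists (r ^+ (a.-1 * q)); split.
  move/Q_sub/(_ (fun=> 1)) => /eqP; rewrite rmorphXn /= out_prod_one expr1n.
  by rewrite oner_eq0.
have -> : r ^+ (a.-1 * q) * power_witness M
    = \prod_(y <- [seq 'X_t * r | t <- enum T, _ <- enum 'I_q]) y.
  have split_T : \prod_(j < n) 'X_j = (\prod_(t in T) 'X_t) * r.
    by rewrite (bigID (mem T)).
  rewrite big_allpairs_dep big_enum /=.
  under eq_bigr => t _ do rewrite big_enum prodr_const card_ord exprMn.
  rewrite big_split prodrXl prodr_const /= card_window /power_witness -/q split_T.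
  rewrite exprMn mulrCA -exprD -exprM; congr (_ * r ^+ _).
  by rewrite -{2}(prednK a_gt0) mulnSr mulnC.
apply: ideal_pow_prod => [|y /allpairsP[[t k] [/= t_T _ ->]]].
  rewrite size_allpairs -cardE card_window size_enum_ord mulnC.
  exact/ltnW/ltn_ceil.
by apply: cyclic_idealM_out_prod => c; rewrite mevalXU /zero_on -mem_enum t_T.
Qed.

Lemma alpha_cyclic_bounds M :
  exists d, alpha_is (symb_pow cyclic_ideal M) d /\ (n * M <= a * d <= n * (M + a))%N.
Proof.
have [d [alpha_d le_d]] := alpha_exists (symb_pow_power_witness M) (power_witness_neq0 M).
exists d; split=> //; apply/andP; split.
  by have [[f [f_M [f_neq0 <-]]] _] := alpha_d; apply: symb_pow_tdeg_lb.
apply: leq_trans (_ : a * (n * (M %/ a).+1) <= _)%N.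
  by rewrite leq_mul2l -tdeg_power_witness le_d orbT.
by rewrite mulnCA leq_mul2l mulnS addnC leq_add2r mulnC leq_divM orbT.
Qed.
End CyclicConfiguration.

Theorem theorem2p9 (K : fieldType)
  (K_infinite : forall s : seq K, exists x : K, x \notin s)
  (a b : nat) :
  (1 <= a)%N -> (a < b)%N ->
  exists (N : nat) (W : seq (fat_comp K N.+1)),
    valid_fat W /\ waldschmidt_is (fatflat_ideal W) (b%:R / a%:R).
Proof.
case: b => [//|N] a_gt0 a_lt_b.
exists N, (cyclic_config K N a); split; first exact: valid_cyclic_config.
apply: waldschmidt_of_alpha_bounds => // m.
exact: alpha_cyclic_bounds.
Qed.
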